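(* Let $\mathcal{X}$ be a skeletally small additive category and let $d_{\mathrm{III}}:\overline{\mathrm{III}}(\mathcal{X})\to\overline{\mathrm{III}}(\mathcal{X}^{op})$ be the contravariant functor obtained by reversing all arrows, i.e. sending $X_1\xrightarrow{f_1}X_2\xrightarrow{f_2}X_3$ to the diagram $X_3\xrightarrow{f_2}X_2\xrightarrow{f_1}X_1$ in $\mathcal{X}^{op}$ and a morphism $(\alpha_1,\alpha_2,\alpha_3)$ to $(\alpha_3,\alpha_2,\alpha_1)$ regarded in $\mathcal{X}^{op}$. Then $d_{\mathrm{III}}$ is, up to natural isomorphism, the unique exact contravariant functor $\overline{\mathrm{III}}(\mathcal{X})\to\overline{\mathrm{III}}(\mathcal{X}^{op})$ with $d_{\mathrm{III}}\circ\mathfrak{j}\cong\mathfrak{j}^{op}\circ\mathfrak{d}$.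
   Context: $\overline{\mathrm{III}}(\mathcal{X})$ (Adelman's category) has objects diagrams $X_1\xrightarrow{f_1}X_2\xrightarrow{f_2}X_3$ in $\mathcal{X}$ (not necessarily complexes) and morphisms to $Y_1\xrightarrow{g_1}Y_2\xrightarrow{g_2}Y_3$ the commuting triples $(\alpha_1,\alpha_2,\alpha_3)$ modulo those with $\alpha_2=g_1s+tf_2$ for some $s:X_2\to Y_1$, $t:X_3\to Y_2$; it is abelian. $\mathfrak{j}:\mathcal{X}\to\overline{\mathrm{III}}(\mathcal{X})$, $X\mapsto(0\to X\to0)$, and $\mathfrak{j}^{op}:\mathcal{X}^{op}\to\overline{\mathrm{III}}(\mathcal{X}^{op})$ is the analogous functor for $\mathcal{X}^{op}$. $\mathfrak{d}:\mathcal{X}\to\mathcal{X}^{op}$ is the canonical contravariant identity (duality). *)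

Record RawAdd := MkRaw {
  Ob : Type;
  Hom : Ob -> Ob -> Type;
  heq : forall a b : Ob, Hom a b -> Hom a b -> Prop;
  idm : forall a : Ob, Hom a a;
  comp : forall a b c : Ob, Hom b c -> Hom a b -> Hom a c;
  hzero : forall a b : Ob, Hom a b;
  hadd : forall a b : Ob, Hom a b -> Hom a b -> Hom a b }.

Arguments Hom {r} _ _.
Arguments heq {r a b} _ _.
Arguments idm {r} a.
Arguments comp {r a b c} _ _.
Arguments hzero {r} a b.
Arguments hadd {r a b} _ _.

Definition opR (C : RawAdd) : RawAdd :=
  MkRaw (Ob C) (fun a b => @Hom C b a) (fun a b u v => @heq C b a u v)
    (@idm C) (fun a b c g f => @comp C c b a f g) (fun a b => @hzero C b a)
    (fun a b u v => @hadd C b a u v).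

Record AddCat := MkAdd {
  AC :> RawAdd;
  hopp : forall a b : Ob AC, @Hom AC a b -> @Hom AC a b;
  zob : Ob AC;
  heq_refl : forall a b (f : @Hom AC a b), heq f f;
  heq_sym : forall a b (f g : @Hom AC a b), heq f g -> heq g f;
  heq_trans : forall a b (f g h : @Hom AC a b), heq f g -> heq g h -> heq f h;
  comp_resp : forall a b c (f f' : @Hom AC a b) (g g' : @Hom AC b c),
      heq f f' -> heq g g' -> heq (comp g f) (comp g' f');
  add_resp : forall a b (f f' g g' : @Hom AC a b),
      heq f f' -> heq g g' -> heq (hadd f g) (hadd f' g');
  opp_resp : forall a b (f f' : @Hom AC a b), heq f f' -> heq (hopp a b f) (hopp a b f');
  compA : forall a b c d (f : @Hom AC a b) (g : @Hom AC b c) (h : @Hom AC c d),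
      heq (comp h (comp g f)) (comp (comp h g) f);
  comp1l : forall a b (f : @Hom AC a b), heq (comp (idm b) f) f;
  comp1r : forall a b (f : @Hom AC a b), heq (comp f (idm a)) f;
  addA : forall a b (f g h : @Hom AC a b), heq (hadd f (hadd g h)) (hadd (hadd f g) h);
  addC : forall a b (f g : @Hom AC a b), heq (hadd f g) (hadd g f);
  add0l : forall a b (f : @Hom AC a b), heq (hadd (hzero a b) f) f;
  addNl : forall a b (f : @Hom AC a b), heq (hadd (hopp a b f) f) (hzero a b);
  distl : forall a b c (f : @Hom AC a b) (g g' : @Hom AC b c),
      heq (comp (hadd g g') f) (hadd (comp g f) (comp g' f));
  distr : forall a b c (f f' : @Hom AC a b) (g : @Hom AC b c),
      heq (comp g (hadd f f')) (hadd (comp g f) (comp g f'));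
  comp0l : forall a b c (f : @Hom AC a b), heq (comp (hzero b c) f) (hzero a c);
  comp0r : forall a b c (g : @Hom AC b c), heq (comp g (hzero a b)) (hzero a c);
  zob_src : forall a (u v : @Hom AC zob a), heq u v;
  zob_tgt : forall a (u v : @Hom AC a zob), heq u v }.

Arguments hopp {a0 a b} _.

(* binary biproducts: together with the above, X is an additive category *)
Definition has_biproducts (X : AddCat) : Prop :=
  forall a b : Ob X, exists (p : Ob X) (i1 : @Hom X a p) (i2 : @Hom X b p)
    (p1 : @Hom X p a) (p2 : @Hom X p b),
    heq (comp p1 i1) (idm a) /\ heq (comp p2 i2) (idm b) /\
    heq (comp p1 i2) (hzero b a) /\ heq (comp p2 i1) (hzero a b) /\
    heq (hadd (comp i1 p1) (comp i2 p2)) (idm p).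

Definition opA (X : AddCat) : AddCat.
Proof.
  refine (@MkAdd (opR X) (fun a b f => @hopp X b a f) (zob X)
    _ _ _ _ _ _ _ _ _ _ _ _ _ _ _ _ _ _ _); simpl; intros.
  - apply heq_refl.
  - apply heq_sym; assumption.
  - eapply heq_trans; eassumption.
  - apply comp_resp; assumption.
  - apply add_resp; assumption.
  - apply opp_resp; assumption.
  - apply heq_sym, compA.
  - apply comp1r.
  - apply comp1l.
  - apply addA.
  - apply addC.
  - apply add0l.
  - apply addNl.
  - apply distr.
  - apply distl.
  - apply comp0r.
  - apply comp0l.
  - apply zob_tgt.
  - apply zob_src.
Defined.

Record AOb (X : AddCat) := MkAOb {
  o1 : Ob X; o2 : Ob X; o3 : Ob X;
  m1 : @Hom X o1 o2; m2 : @Hom X o2 o3 }.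
Arguments MkAOb {X} o1 o2 o3 m1 m2.
Arguments o1 {X} _. Arguments o2 {X} _. Arguments o3 {X} _.
Arguments m1 {X} _. Arguments m2 {X} _.

Record AHom (X : AddCat) (P Q : AOb X) := MkAHom {
  a1 : @Hom X (o1 P) (o1 Q);
  a2 : @Hom X (o2 P) (o2 Q);
  a3 : @Hom X (o3 P) (o3 Q);
  sq1 : heq (comp (m1 Q) a1) (comp a2 (m1 P));
  sq2 : heq (comp a3 (m2 P)) (comp (m2 Q) a2) }.
Arguments AHom {X} P Q.
Arguments MkAHom {X P Q} a1 a2 a3 sq1 sq2.
Arguments a1 {X P Q} _. Arguments a2 {X P Q} _. Arguments a3 {X P Q} _.
Arguments sq1 {X P Q} _. Arguments sq2 {X P Q} _.

Definition Aheq (X : AddCat) (P Q : AOb X) (al be : AHom P Q) : Prop :=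
  exists (s : @Hom X (o2 P) (o1 Q)) (t : @Hom X (o3 P) (o2 Q)),
    heq (hadd (a2 al) (hopp (a2 be))) (hadd (comp (m1 Q) s) (comp t (m2 P))).

Definition Aid (X : AddCat) (P : AOb X) : AHom P P.
Proof.
  refine (MkAHom (idm _) (idm _) (idm _) _ _).
  - eapply heq_trans; [apply comp1r|]. apply heq_sym, comp1l.
  - eapply heq_trans; [apply comp1l|]. apply heq_sym, comp1r.
Defined.

Definition Acomp (X : AddCat) (P Q R : AOb X) (be : AHom Q R) (al : AHom P Q)
  : AHom P R.
Proof.
  refine (MkAHom (comp (a1 be) (a1 al)) (comp (a2 be) (a2 al))
                 (comp (a3 be) (a3 al)) _ _).
  - eapply heq_trans; [apply compA|].
    eapply heq_trans; [apply comp_resp; [apply heq_refl | apply (sq1 be)]|].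
    eapply heq_trans; [apply heq_sym, compA|].
    eapply heq_trans; [apply comp_resp; [apply (sq1 al) | apply heq_refl]|].
    apply compA.
  - eapply heq_trans; [apply heq_sym, compA|].
    eapply heq_trans; [apply comp_resp; [apply (sq2 al) | apply heq_refl]|].
    eapply heq_trans; [apply compA|].
    eapply heq_trans; [apply comp_resp; [apply heq_refl | apply (sq2 be)]|].
    apply heq_sym, compA.
Defined.

Definition Azero (X : AddCat) (P Q : AOb X) : AHom P Q.
Proof.
  refine (MkAHom (hzero _ _) (hzero _ _) (hzero _ _) _ _).
  - eapply heq_trans; [apply comp0r|]. apply heq_sym, comp0l.
  - eapply heq_trans; [apply comp0l|]. apply heq_sym, comp0r.
Defined.

Definition Aadd (X : AddCat) (P Q : AOb X) (al be : AHom P Q) : AHom P Q.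
Proof.
  refine (MkAHom (hadd (a1 al) (a1 be)) (hadd (a2 al) (a2 be))
                 (hadd (a3 al) (a3 be)) _ _).
  - eapply heq_trans; [apply distr|].
    eapply heq_trans; [apply add_resp; [apply (sq1 al) | apply (sq1 be)]|].
    apply heq_sym, distl.
  - eapply heq_trans; [apply distl|].
    eapply heq_trans; [apply add_resp; [apply (sq2 al) | apply (sq2 be)]|].
    apply heq_sym, distr.
Defined.

Definition Adel (X : AddCat) : RawAdd :=
  MkRaw (AOb X) (@AHom X) (@Aheq X) (@Aid X) (@Acomp X) (@Azero X) (@Aadd X).

Record Functor (A B : RawAdd) := MkFunctor {
  Fob : Ob A -> Ob B;
  Fmor : forall a b : Ob A, @Hom A a b -> @Hom B (Fob a) (Fob b) }.
Arguments MkFunctor {A B} Fob Fmor.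
Arguments Fob {A B} _ _.
Arguments Fmor {A B} _ {a b} _.

Definition fcomp (A B C : RawAdd) (G : Functor B C) (F : Functor A B)
  : Functor A C :=
  MkFunctor (fun a => Fob G (Fob F a)) (fun a b f => Fmor G (Fmor F f)).
Arguments fcomp {A B C} G F.

Definition is_functor (A B : RawAdd) (F : Functor A B) : Prop :=
  (forall a b (f g : @Hom A a b), heq f g -> heq (Fmor F f) (Fmor F g)) /\
  (forall a, heq (Fmor F (idm a)) (idm (Fob F a))) /\
  (forall a b c (f : @Hom A a b) (g : @Hom A b c),
      heq (Fmor F (comp g f)) (comp (Fmor F g) (Fmor F f))).
Arguments is_functor {A B} F.

Definition is_additive (A B : RawAdd) (F : Functor A B) : Prop :=
  forall a b (f g : @Hom A a b), heq (Fmor F (hadd f g)) (hadd (Fmor F f) (Fmor F g)).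
Arguments is_additive {A B} F.

Definition is_kernel (A : RawAdd) (a b K : Ob A) (f : @Hom A a b) (k : @Hom A K a)
  : Prop :=
  heq (comp f k) (hzero K b) /\
  forall (T : Ob A) (t : @Hom A T a), heq (comp f t) (hzero T b) ->
    exists u : @Hom A T K, heq (comp k u) t /\
      forall u' : @Hom A T K, heq (comp k u') t -> heq u' u.
Arguments is_kernel {A a b K} f k.

Definition is_cokernel (A : RawAdd) (a b Q : Ob A) (f : @Hom A a b) (c : @Hom A b Q)
  : Prop :=
  heq (comp c f) (hzero a Q) /\
  forall (T : Ob A) (t : @Hom A b T), heq (comp t f) (hzero a T) ->
    exists u : @Hom A Q T, heq (comp u c) t /\
      forall u' : @Hom A Q T, heq (comp u' c) t -> heq u' u.
Arguments is_cokernel {A a b Q} f c.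

(* exact functor between abelian categories: additive, preserving kernels and
   cokernels (for a contravariant functor A -> B, i.e. a functor A -> B^op,
   this means: kernels go to cokernels and cokernels to kernels in B) *)
Definition is_exact (A B : RawAdd) (F : Functor A B) : Prop :=
  is_additive F /\
  (forall a b K (f : @Hom A a b) (k : @Hom A K a),
      is_kernel f k -> is_kernel (Fmor F f) (Fmor F k)) /\
  (forall a b Q (f : @Hom A a b) (c : @Hom A b Q),
      is_cokernel f c -> is_cokernel (Fmor F f) (Fmor F c)).
Arguments is_exact {A B} F.

Definition nat_iso (A B : RawAdd) (G H : Functor A B) : Prop :=
  exists (eta : forall a, @Hom B (Fob G a) (Fob H a))
         (th : forall a, @Hom B (Fob H a) (Fob G a)),
    (forall a, heq (comp (th a) (eta a)) (idm (Fob G a)) /\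
               heq (comp (eta a) (th a)) (idm (Fob H a))) /\
    (forall a b (f : @Hom A a b),
        heq (comp (eta b) (Fmor G f)) (comp (Fmor H f) (eta a))).
Arguments nat_iso {A B} G H.

Definition jfun (X : AddCat) : Functor X (Adel X).
Proof.
  refine (@MkFunctor X (Adel X)
    (fun x => MkAOb (zob X) x (zob X) (hzero (zob X) x) (hzero x (zob X)))
    (fun x y f => @MkAHom X (MkAOb (zob X) x (zob X) (hzero (zob X) x) (hzero x (zob X))) (MkAOb (zob X) y (zob X) (hzero (zob X) y) (hzero y (zob X))) (idm (zob X)) f (idm (zob X)) _ _)).
  - apply zob_src.
  - apply zob_tgt.
Defined.

(* j^op o d : X -> III-bar(X^op), contravariant, i.e. a functor
   X -> (III-bar(X^op))^op *)
Definition jop_d (X : AddCat) : Functor X (opR (Adel (opA X))) :=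
  @MkFunctor X (opR (Adel (opA X))) (fun x : Ob X => Fob (jfun (opA X)) x)
    (fun (x y : Ob X) (f : @Hom X x y) =>
       @Fmor (opA X) (Adel (opA X)) (jfun (opA X)) y x f).

Definition dIII (X : AddCat) : Functor (Adel X) (opR (Adel (opA X))) :=
  @MkFunctor (Adel X) (opR (Adel (opA X)))
    (fun P : AOb X => @MkAOb (opA X) (o3 P) (o2 P) (o1 P) (m2 P) (m1 P))
    (fun P Q (al : AHom P Q) =>
       @MkAHom (opA X) (@MkAOb (opA X) (o3 Q) (o2 Q) (o1 Q) (m2 Q) (m1 Q))
                       (@MkAOb (opA X) (o3 P) (o2 P) (o1 P) (m2 P) (m1 P))
               (a3 al) (a2 al) (a1 al) (sq2 al) (sq1 al)).

From Stdlib Require Import Setoid Morphisms ClassicalEpsilon.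

(* d_III is bijective on objects and on commuting triples, and it matches the two
   homotopy relations by exchanging the homotopies s and t.  A zero-preserving,
   surjective, fully faithful functor preserves kernels and cokernels, and d_III
   commutes with j on the nose.

   Uniqueness comes from a presentation of every object by objects built from the
   image of j: for f : x -> y the object K f = (0 -> x -f-> y) is the kernel of
   j f : j x -> j y, and P = (X1 -f1-> X2 -f2-> X3) is the cokernel of
   (1, f1, 1) : K (f2 f1) -> K f2.  An exact functor preserves this presentation, so
   an isomorphism F j ~ G j between exact functors extends first to the objects K f
   and then to every P; naturality holds because kernels are monic and cokernels
   epic. *)


Class IsZeroCat (B : RawAdd) : Prop := {
  heq_equiv :: forall a b, Equivalence (@heq B a b);
  comp_proper :: forall a b c, Proper (heq ==> heq ==> heq) (@comp B a b c);
  cat_compA : forall {a b c d} (f : @Hom B a b) (g : @Hom B b c) (h : @Hom B c d),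
      heq (comp h (comp g f)) (comp (comp h g) f);
  cat_comp1l : forall {a b} (f : @Hom B a b), heq (comp (idm b) f) f;
  cat_comp1r : forall {a b} (f : @Hom B a b), heq (comp f (idm a)) f;
  cat_comp0l : forall {a b c} (f : @Hom B a b), heq (comp (hzero b c) f) (hzero a c);
  cat_comp0r : forall {a b c} (g : @Hom B b c), heq (comp g (hzero a b)) (hzero a c) }.

#[export] Instance IsZeroCat_opR B `{IsZeroCat B} : IsZeroCat (opR B).
Proof.
  split; cbn; intros.
  - apply heq_equiv.
  - intros g g' Hg f f' Hf. now apply comp_proper.
  - symmetry. apply cat_compA.
  - apply cat_comp1r.
  - apply cat_comp1l.
  - apply cat_comp0r.
  - apply cat_comp0l.
Qed.

#[export] Instance IsZeroCat_AddCat (X : AddCat) : IsZeroCat X.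
Proof.
  split; intros.
  - split; red; intros; [apply heq_refl | now apply heq_sym | eapply heq_trans; eauto].
  - intros g g' Hg f f' Hf. now apply comp_resp.
  - apply compA.
  - apply comp1l.
  - apply comp1r.
  - apply comp0l.
  - apply comp0r.
Qed.

#[export] Instance hadd_proper (X : AddCat) a b :
  Proper (heq ==> heq ==> heq) (@hadd X a b).
Proof. intros f f' Hf g g' Hg. now apply add_resp. Qed.

#[export] Instance hopp_proper (X : AddCat) a b : Proper (heq ==> heq) (@hopp X a b).
Proof. intros f f' Hf. now apply opp_resp. Qed.

Arguments addA {a0 a b} f g h.
Arguments addC {a0 a b} f g.
Arguments add0l {a0 a b} f.
Arguments addNl {a0 a b} f.
Arguments distl {a0 a b c} f g g'.
Arguments distr {a0 a b c} f f' g.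

Section AdditiveAlgebra.
Variable X : AddCat.
Implicit Types a b c : Ob X.

Lemma add0r a b (f : @Hom X a b) : heq (hadd f (hzero a b)) f.
Proof. rewrite addC. apply add0l. Qed.

Lemma addNr a b (f : @Hom X a b) : heq (hadd f (hopp f)) (hzero a b).
Proof. rewrite addC. apply addNl. Qed.

Lemma opp_unique a b (f g : @Hom X a b) : heq (hadd f g) (hzero a b) -> heq g (hopp f).
Proof.
  intro E. rewrite <- (add0l g), <- (addNl f), <- addA, E. apply add0r.
Qed.

Lemma oppK a b (f : @Hom X a b) : heq (hopp (hopp f)) f.
Proof. symmetry. apply opp_unique, addNl. Qed.

Lemma opp0 a b : heq (hopp (hzero a b)) (hzero a b).
Proof. symmetry. apply opp_unique, add0l. Qed.

Lemma addACA a b (p q r s : @Hom X a b) :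
  heq (hadd (hadd p q) (hadd r s)) (hadd (hadd p r) (hadd q s)).
Proof. rewrite <- !addA, (addA q r s), (addC q r), <- (addA r q s). reflexivity. Qed.

Lemma oppD a b (f g : @Hom X a b) : heq (hopp (hadd f g)) (hadd (hopp f) (hopp g)).
Proof. symmetry. apply opp_unique. rewrite addACA, !addNr. apply add0l. Qed.

Lemma comp_oppl a b c (f : @Hom X a b) (g : @Hom X b c) :
  heq (comp (hopp g) f) (hopp (comp g f)).
Proof. apply opp_unique. rewrite <- distl, addNr. apply cat_comp0l. Qed.

Lemma comp_oppr a b c (f : @Hom X a b) (g : @Hom X b c) :
  heq (comp g (hopp f)) (hopp (comp g f)).
Proof. apply opp_unique. rewrite <- distr, addNr. apply cat_comp0r. Qed.

Lemma addK a b (f g : @Hom X a b) : heq (hadd (hadd f g) (hopp g)) f.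
Proof. rewrite <- addA, addNr. apply add0r. Qed.

Lemma subrr a b (f g : @Hom X a b) : heq f g -> heq (hadd f (hopp g)) (hzero a b).
Proof. intros ->. apply addNr. Qed.

Lemma opp_sub a b (f g : @Hom X a b) : heq (hopp (hadd f (hopp g))) (hadd g (hopp f)).
Proof. rewrite oppD, oppK. apply addC. Qed.

Lemma sub_add_sub a b (f g h : @Hom X a b) :
  heq (hadd (hadd f (hopp g)) (hadd g (hopp h))) (hadd f (hopp h)).
Proof. rewrite <- addA, (addA (hopp g)), addNl, add0l. reflexivity. Qed.

Lemma sub_comp a b c (f f' : @Hom X a b) (g g' : @Hom X b c) :
  heq (hadd (comp (hadd g (hopp g')) f) (comp g' (hadd f (hopp f'))))
      (hadd (comp g f) (hopp (comp g' f'))).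
Proof.
  rewrite distr, distl, comp_oppr, comp_oppl. apply sub_add_sub.
Qed.

End AdditiveAlgebra.

Section AdelmanCategory.
Variable X : AddCat.

Definition null_homotopic (P Q : AOb X) (h : @Hom X (o2 P) (o2 Q)) : Prop :=
  exists (s : @Hom X (o2 P) (o1 Q)) (t : @Hom X (o3 P) (o2 Q)),
    heq h (hadd (comp (m1 Q) s) (comp t (m2 P))).

#[export] Instance null_homotopic_proper P Q : Proper (heq ==> iff) (null_homotopic P Q).
Proof.
  intros h h' E. split; intros [s [t H]]; exists s, t; [rewrite <- E | rewrite E]; exact H.
Qed.

Lemma null_homotopic0 P Q : null_homotopic P Q (hzero _ _).
Proof.
  exists (hzero _ _), (hzero _ _). rewrite cat_comp0r, cat_comp0l. symmetry. apply add0l.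
Qed.

Lemma null_homotopicD P Q h h' :
  null_homotopic P Q h -> null_homotopic P Q h' -> null_homotopic P Q (hadd h h').
Proof.
  intros [s [t H]] [s' [t' H']]. exists (hadd s s'), (hadd t t').
  rewrite H, H', distr, distl. apply addACA.
Qed.

Lemma null_homotopicN P Q h : null_homotopic P Q h -> null_homotopic P Q (hopp h).
Proof.
  intros [s [t H]]. exists (hopp s), (hopp t).
  rewrite H, oppD, comp_oppr, comp_oppl. reflexivity.
Qed.

Lemma null_homotopic_compl P Q R (be : AHom Q R) h :
  null_homotopic P Q h -> null_homotopic P R (comp (a2 be) h).
Proof.
  intros [s [t H]]. exists (comp (a1 be) s), (comp (a2 be) t).
  rewrite H, distr, !cat_compA, (sq1 be). reflexivity.
Qed.

Lemma null_homotopic_compr P Q R (al : AHom P Q) h :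
  null_homotopic Q R h -> null_homotopic P R (comp h (a2 al)).
Proof.
  intros [s [t H]]. exists (comp s (a2 al)), (comp t (a3 al)).
  rewrite H, distl, <- !cat_compA, (sq2 al). reflexivity.
Qed.

Lemma Aheq_null_homotopic P Q (al be : AHom P Q) :
  Aheq X P Q al be = null_homotopic P Q (hadd (a2 al) (hopp (a2 be))).
Proof. reflexivity. Qed.

Lemma Aheq_of_heq P Q (al be : AHom P Q) : heq (a2 al) (a2 be) -> Aheq X P Q al be.
Proof. intro E. rewrite Aheq_null_homotopic, subrr by exact E. apply null_homotopic0. Qed.

#[export] Instance IsZeroCat_Adel : IsZeroCat (Adel X).
Proof.
  split; cbn; intros.
  - split.
    + intro al. apply Aheq_of_heq. reflexivity.
    + intros al be H. rewrite Aheq_null_homotopic in *. rewrite <- opp_sub.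
      now apply null_homotopicN.
    + intros al be ga H H'. rewrite Aheq_null_homotopic in *.
      rewrite <- (sub_add_sub _ _ _ _ (a2 be)). now apply null_homotopicD.
  - intros g g' Hg f f' Hf. rewrite Aheq_null_homotopic in *. cbn. rewrite <- sub_comp.
    apply null_homotopicD; [now apply null_homotopic_compr | now apply null_homotopic_compl].
  - apply Aheq_of_heq, cat_compA.
  - apply Aheq_of_heq, cat_comp1l.
  - apply Aheq_of_heq, cat_comp1r.
  - apply Aheq_of_heq, cat_comp0l.
  - apply Aheq_of_heq, cat_comp0r.
Qed.

End AdelmanCategory.

Section Kernels.
Context {B : RawAdd} `{IsZeroCat B}.

Definition are_inverse {a b : Ob B} (e : @Hom B a b) (t : @Hom B b a) : Prop :=
  heq (comp t e) (idm a) /\ heq (comp e t) (idm b).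

Lemma are_inverse_sym a b (e : @Hom B a b) (t : @Hom B b a) :
  are_inverse e t -> are_inverse t e.
Proof. intros []. now split. Qed.

Lemma kernel_mono a b K (f : @Hom B a b) (k : @Hom B K a) :
  is_kernel f k -> forall T (u u' : @Hom B T K), heq (comp k u) (comp k u') -> heq u u'.
Proof.
  intros [k0 kuniv] T u u' E.
  destruct (kuniv T (comp k u)) as [v [_ v_unique]].
  - rewrite cat_compA, k0. apply cat_comp0l.
  - rewrite (v_unique u), (v_unique u'); [reflexivity | now symmetry | reflexivity].
Qed.

Lemma kernel_iso a b K a' b' K' (f : @Hom B a b) (k : @Hom B K a)
    (f' : @Hom B a' b') (k' : @Hom B K' a')
    (ea : @Hom B a a') (ta : @Hom B a' a) (eb : @Hom B b b') (tb : @Hom B b' b) :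
  is_kernel f k -> is_kernel f' k' -> are_inverse ea ta -> are_inverse eb tb ->
  heq (comp eb f) (comp f' ea) ->
  exists (eK : @Hom B K K') (tK : @Hom B K' K),
    are_inverse eK tK /\ heq (comp k' eK) (comp ea k).
Proof.
  intros Hk Hk' [ta_ea ea_ta] [tb_eb eb_tb] Hsq.
  assert (Hsq' : heq (comp f ta) (comp tb f')).
  { rewrite <- (cat_comp1l (comp f ta)), <- tb_eb, <- !cat_compA, (cat_compA ta), Hsq.
    now rewrite <- cat_compA, ea_ta, cat_comp1r. }
  destruct Hk as [k0 kuniv], Hk' as [k0' kuniv'].
  destruct (kuniv' K (comp ea k)) as [eK [HeK _]].
  { rewrite cat_compA, <- Hsq, <- cat_compA, k0. apply cat_comp0r. }
  destruct (kuniv K' (comp ta k')) as [tK [HtK _]].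
  { rewrite cat_compA, Hsq', <- cat_compA, k0'. apply cat_comp0r. }
  exists eK, tK. split; [split|]; [| |exact HeK].
  - apply (kernel_mono _ _ _ f k); [now split|].
    rewrite cat_compA, HtK, <- cat_compA, HeK, cat_compA, ta_ea, cat_comp1l, cat_comp1r.
    reflexivity.
  - apply (kernel_mono _ _ _ f' k'); [now split|].
    rewrite cat_compA, HeK, <- cat_compA, HtK, cat_compA, ea_ta, cat_comp1l, cat_comp1r.
    reflexivity.
Qed.

End Kernels.

Section Cokernels.
Context {B : RawAdd} `{IsZeroCat B}.

Lemma cokernel_epi a b Q (f : @Hom B a b) (c : @Hom B b Q) :
  is_cokernel f c -> forall T (u u' : @Hom B Q T), heq (comp u c) (comp u' c) -> heq u u'.
Proof. exact (kernel_mono (B := opR B) b a Q f c). Qed.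

Lemma cokernel_iso a b Q a' b' Q' (f : @Hom B a b) (c : @Hom B b Q)
    (f' : @Hom B a' b') (c' : @Hom B b' Q')
    (ea : @Hom B a a') (ta : @Hom B a' a) (eb : @Hom B b b') (tb : @Hom B b' b) :
  is_cokernel f c -> is_cokernel f' c' -> are_inverse ea ta -> are_inverse eb tb ->
  heq (comp eb f) (comp f' ea) ->
  exists (eQ : @Hom B Q Q') (tQ : @Hom B Q' Q),
    are_inverse eQ tQ /\ heq (comp eQ c) (comp c' eb).
Proof.
  intros Hc Hc' Hea Heb Hsq.
  destruct (kernel_iso (B := opR B) _ _ _ _ _ _ f' c' f c eb tb ea ta Hc' Hc)
    as [eQ [tQ [HQ HcQ]]]; try now apply are_inverse_sym.
  - cbn. now symmetry.
  - exists eQ, tQ. split; [now apply are_inverse_sym | exact HcQ].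
Qed.

End Cokernels.

Definition opF {A B : RawAdd} (D : Functor A B) : Functor (opR A) (opR B) :=
  @MkFunctor (opR A) (opR B) (Fob D) (fun a b f => @Fmor A B D b a f).

Definition surjective_fully_faithful {A B : RawAdd} (D : Functor A B) : Prop :=
  is_functor D /\
  (forall a b, heq (Fmor D (hzero a b)) (hzero _ _)) /\
  (forall T, exists a, Fob D a = T) /\
  (forall a b (h : @Hom B (Fob D a) (Fob D b)), exists f, heq (Fmor D f) h) /\
  (forall a b (f g : @Hom A a b), heq (Fmor D f) (Fmor D g) -> heq f g).

Lemma surjective_fully_faithful_opF {A B : RawAdd} (D : Functor A B) :
  surjective_fully_faithful D -> surjective_fully_faithful (opF D).
Proof.
  intros ((D_resp & D_id & D_comp) & D_zero & D_surj & D_full & D_faithful).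
  repeat split; cbn; intros; auto.
Qed.

Lemma sff_kernel {A B : RawAdd} `{IsZeroCat B} (D : Functor A B)
    a b K (f : @Hom A a b) (k : @Hom A K a) :
  surjective_fully_faithful D -> is_kernel f k -> is_kernel (Fmor D f) (Fmor D k).
Proof.
  intros ((D_resp & _ & D_comp) & D_zero & D_surj & D_full & D_faithful) [k0 kuniv].
  split.
  - rewrite <- D_comp, (D_resp _ _ _ _ k0). apply D_zero.
  - intros T t Ht. destruct (D_surj T) as [c <-], (D_full _ _ t) as [t0 Ht0].
    destruct (kuniv c t0) as [u [Hu u_unique]].
    { apply D_faithful. now rewrite D_comp, Ht0, Ht, D_zero. }
    exists (Fmor D u). split.
    + now rewrite <- D_comp, (D_resp _ _ _ _ Hu).
    + intros u' Hu'. destruct (D_full _ _ u') as [u1 Hu1]. rewrite <- Hu1.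
      apply D_resp, u_unique, D_faithful. now rewrite D_comp, Hu1, Hu', Ht0.
Qed.

Lemma sff_cokernel {A B : RawAdd} `{IsZeroCat B} (D : Functor A B)
    a b Q (f : @Hom A a b) (c : @Hom A b Q) :
  surjective_fully_faithful D -> is_cokernel f c -> is_cokernel (Fmor D f) (Fmor D c).
Proof.
  intro HD. exact (sff_kernel (opF D) b a Q f c (surjective_fully_faithful_opF D HD)).
Qed.

Section NatIso.
Context {A B : RawAdd} `{IsZeroCat B}.

Lemma nat_iso_sym (F G : Functor A B) : nat_iso F G -> nat_iso G F.
Proof.
  intros (eta & th & iso & nat). exists th, eta. split.
  - intro a. apply are_inverse_sym, iso.
  - intros a b f. destruct (iso a) as [_ ea_ta], (iso b) as [tb_eb _].
    rewrite <- (cat_comp1r (comp (th b) (Fmor G f))), <- ea_ta, !cat_compA.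
    rewrite <- (cat_compA (eta a)), <- nat, !cat_compA, tb_eb, cat_comp1l.
    reflexivity.
Qed.

Lemma nat_iso_trans (F G K : Functor A B) : nat_iso F G -> nat_iso G K -> nat_iso F K.
Proof.
  intros (eta & th & iso & nat) (eta' & th' & iso' & nat').
  exists (fun a => comp (eta' a) (eta a)), (fun a => comp (th a) (th' a)). split.
  - intro a. destruct (iso a) as [i1 i2], (iso' a) as [i1' i2']. split.
    + now rewrite <- !cat_compA, (cat_compA (eta a) (eta' a)), i1', cat_comp1l.
    + now rewrite <- !cat_compA, (cat_compA (th' a) (th a)), i2, cat_comp1l.
  - intros a b f. now rewrite <- cat_compA, nat, cat_compA, nat', cat_compA.
Qed.

End NatIso.

Section ReversalFunctor.
Variable X : AddCat.
Local Notation D := (dIII X).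

Lemma dIII_heq (P Q : AOb X) (al be : AHom P Q) :
  Aheq X P Q al be <-> heq (Fmor D al) (Fmor D be).
Proof. cbn. split; intros (s & t & E); exists t, s; cbn; now rewrite E, addC. Qed.

Lemma dIII_functor : is_functor D.
Proof.
  split; [|split].
  - intros P Q al be. apply dIII_heq.
  - intro P. now apply Aheq_of_heq.
  - intros P Q R al be. now apply Aheq_of_heq.
Qed.

Lemma dIII_surjective_fully_faithful : surjective_fully_faithful D.
Proof.
  split; [exact dIII_functor | split; [|split; [|split]]].
  - intros P Q. now apply Aheq_of_heq.
  - intros [x1 x2 x3 f1 f2]. now exists (@MkAOb X x3 x2 x1 f2 f1).
  - intros P Q [h1 h2 h3 s1 s2]. exists (@MkAHom X P Q h3 h2 h1 s2 s1).
    now apply Aheq_of_heq.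
  - intros P Q al be. apply dIII_heq.
Qed.

Lemma dIII_exact : is_exact D.
Proof.
  pose proof dIII_surjective_fully_faithful as HD.
  split; [|split].
  - intros P Q al be. now apply Aheq_of_heq.
  - intros P Q K al k. now apply sff_kernel.
  - intros P Q R al c. now apply sff_cokernel.
Qed.

Lemma dIII_j : nat_iso (fcomp D (jfun X)) (jop_d X).
Proof.
  exists (fun x => idm _), (fun x => idm _). split.
  - intro x. split; apply cat_comp1l.
  - intros x y f. apply Aheq_of_heq. cbn. now rewrite cat_comp1l, cat_comp1r.
Qed.

End ReversalFunctor.

Section Presentation.
Variable X : AddCat.
Local Notation j := (jfun X).

Definition kernel_ob {x y : Ob X} (f : @Hom X x y) : AOb X :=
  MkAOb (zob X) x y (hzero (zob X) x) f.

Definition kernel_incl {x y : Ob X} (f : @Hom X x y) :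
  @Hom (Adel X) (kernel_ob f) (Fob j x) :=
  @MkAHom X (kernel_ob f) (Fob j x) (idm (zob X)) (idm x) (hzero y (zob X))
    (zob_src _ _ _ _) (zob_tgt _ _ _ _).

Lemma kernel_incl_is_kernel x y (f : @Hom X x y) :
  is_kernel (Fmor j f) (kernel_incl f).
Proof.
  split.
  - exists (hzero x (zob X)), (idm y). cbn.
    rewrite opp0, add0r, cat_comp1r, cat_comp0l, add0l, cat_comp1l. reflexivity.
  - intros T t (s & t' & Ht). cbn in Ht.
    rewrite opp0, add0r, cat_comp0l, add0l in Ht.
    assert (sq1_u : heq (comp (m1 (kernel_ob f)) (hzero (o1 T) (zob X)))
                        (comp (a2 t) (m1 T))).
    { rewrite <- (sq1 t). cbn. now rewrite !cat_comp0l. }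
    exists (@MkAHom X T (kernel_ob f) _ (a2 t) t' sq1_u (symmetry Ht)). split.
    + apply Aheq_of_heq, cat_comp1l.
    + intros u' (s' & t'' & H). exists s', t''. cbn in *.
      now rewrite <- H, cat_comp1l.
Qed.

Definition cover (P : AOb X) : @Hom (Adel X) (kernel_ob (m2 P)) P.
Proof.
  refine (@MkAHom X (kernel_ob (m2 P)) P (hzero _ _) (idm _) (idm _) _ _).
  - apply zob_src.
  - cbn. now rewrite cat_comp1l, cat_comp1r.
Defined.

Definition cover_rel (P : AOb X) :
  @Hom (Adel X) (kernel_ob (comp (m2 P) (m1 P))) (kernel_ob (m2 P)).
Proof.
  refine (@MkAHom X (kernel_ob (comp (m2 P) (m1 P))) (kernel_ob (m2 P))
            (idm _) (m1 P) (idm _) _ _).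
  - apply zob_src.
  - cbn. now rewrite cat_comp1l.
Defined.

Lemma cover_is_cokernel P : is_cokernel (cover_rel P) (cover P).
Proof.
  split.
  - exists (idm _), (hzero _ _). cbn.
    now rewrite opp0, add0r, cat_comp1l, cat_comp1r, cat_comp0l, add0r.
  - intros T t (s & t' & Ht). cbn in Ht. rewrite opp0, add0r in Ht.
    (* the homotopy (s, t') killing t o cover_rel P corrects t into a map out of P *)
    set (u2 := hadd (a2 t) (hopp (comp t' (m2 P)))).
    assert (sq1_u : heq (comp (m1 T) s) (comp u2 (m1 P))).
    { unfold u2. now rewrite distl, Ht, comp_oppl, <- cat_compA, addK. }
    assert (sq2_u : heq (comp (hadd (a3 t) (hopp (comp (m2 T) t'))) (m2 P))
                        (comp (m2 T) u2)).
    { unfold u2. rewrite distl, distr, comp_oppl, comp_oppr, cat_compA.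
      now rewrite (sq2 t). }
    exists (@MkAHom X P T s u2 _ sq1_u sq2_u). split.
    + exists (hzero _ _), (hopp t'). cbn. unfold u2.
      now rewrite cat_comp1r, cat_comp0r, add0l, comp_oppl, (addC (a2 t)), addK.
    + intros u' (s' & t'' & H). exists s', (hadd t'' t'). cbn in *. unfold u2.
      rewrite cat_comp1r in H.
      now rewrite oppD, oppK, addA, H, distl, addA.
Qed.

Lemma kernel_incl_cover_rel P :
  heq (comp (kernel_incl (m2 P)) (cover_rel P))
    (comp (Fmor j (m1 P)) (kernel_incl (comp (m2 P) (m1 P)))).
Proof. apply Aheq_of_heq. cbn. now rewrite cat_comp1l, cat_comp1r. Qed.

Definition kernel_map {P Q : AOb X} (al : @Hom (Adel X) P Q) :
  @Hom (Adel X) (kernel_ob (m2 P)) (kernel_ob (m2 Q)) :=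
  @MkAHom X (kernel_ob (m2 P)) (kernel_ob (m2 Q)) (idm _) (a2 al) (a3 al)
    (zob_src _ _ _ _) (sq2 al).

Lemma kernel_incl_map P Q (al : @Hom (Adel X) P Q) :
  heq (comp (kernel_incl (m2 Q)) (kernel_map al))
    (comp (Fmor j (a2 al)) (kernel_incl (m2 P))).
Proof. apply Aheq_of_heq. cbn. now rewrite cat_comp1l, cat_comp1r. Qed.

Lemma cover_natural P Q (al : @Hom (Adel X) P Q) :
  heq (comp al (cover P)) (comp (cover Q) (kernel_map al)).
Proof. apply Aheq_of_heq. cbn. now rewrite cat_comp1l, cat_comp1r. Qed.

End Presentation.

Lemma choose_inverse_pairs {A B : RawAdd} (F G : Functor A B)
    (R : forall a, @Hom B (Fob F a) (Fob G a) -> Prop) :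
  (forall a, exists e t, are_inverse e t /\ R a e) ->
  exists (eta : forall a, @Hom B (Fob F a) (Fob G a))
         (th : forall a, @Hom B (Fob G a) (Fob F a)),
    forall a, are_inverse (eta a) (th a) /\ R a (eta a).
Proof.
  intro H.
  assert (Hpair : forall a, exists p : @Hom B (Fob F a) (Fob G a) * @Hom B (Fob G a) (Fob F a),
             are_inverse (fst p) (snd p) /\ R a (fst p)).
  { intro a. destruct (H a) as (e & t & Het). now exists (e, t). }
  exists (fun a => fst (proj1_sig (constructive_indefinite_description _ (Hpair a)))),
         (fun a => snd (proj1_sig (constructive_indefinite_description _ (Hpair a)))).
  intro a. exact (proj2_sig (constructive_indefinite_description _ (Hpair a))).
Qed.

Section Uniqueness.
Context (X : AddCat) {B : RawAdd} `{IsZeroCat B}.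
Local Notation j := (jfun X).
Variables F G : Functor (Adel X) B.
Hypotheses (F_functor : is_functor F) (G_functor : is_functor G).
Hypotheses (F_exact : is_exact F) (G_exact : is_exact G).
Variable eta : forall x, @Hom B (Fob F (Fob j x)) (Fob G (Fob j x)).
Variable th : forall x, @Hom B (Fob G (Fob j x)) (Fob F (Fob j x)).
Hypothesis eta_iso : forall x, are_inverse (eta x) (th x).
Hypothesis eta_natural : forall x y (f : @Hom X x y),
  heq (comp (eta y) (Fmor F (Fmor j f))) (comp (Fmor G (Fmor j f)) (eta x)).

Definition kernel_compatible {x y : Ob X} (f : @Hom X x y)
    (e : @Hom B (Fob F (kernel_ob X f)) (Fob G (kernel_ob X f))) : Prop :=
  heq (comp (Fmor G (kernel_incl X f)) e) (comp (eta x) (Fmor F (kernel_incl X f))).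

Lemma kernel_compatible_iso x y (f : @Hom X x y) :
  exists e t, are_inverse e t /\ kernel_compatible f e.
Proof.
  apply (kernel_iso _ _ _ _ _ _ (Fmor F (Fmor j f)) _ (Fmor G (Fmor j f)) _
                     (eta x) (th x) (eta y) (th y));
    [apply F_exact, kernel_incl_is_kernel | apply G_exact, kernel_incl_is_kernel
    | apply eta_iso | apply eta_iso | apply eta_natural].
Qed.

Lemma kernel_compatible_natural x y (f : @Hom X x y) x' y' (f' : @Hom X x' y')
    (e : @Hom B (Fob F (kernel_ob X f)) (Fob G (kernel_ob X f)))
    (e' : @Hom B (Fob F (kernel_ob X f')) (Fob G (kernel_ob X f')))
    (h : @Hom (Adel X) (kernel_ob X f) (kernel_ob X f')) (g : @Hom X x x') :
  kernel_compatible f e -> kernel_compatible f' e' ->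
  heq (comp (kernel_incl X f') h) (comp (Fmor j g) (kernel_incl X f)) ->
  heq (comp (Fmor G h) e) (comp e' (Fmor F h)).
Proof.
  intros He He' Hh.
  destruct F_functor as (F_resp & _ & F_comp), G_functor as (G_resp & _ & G_comp).
  apply (kernel_mono _ _ _ (Fmor G (Fmor j f')) (Fmor G (kernel_incl X f')));
    [apply G_exact, kernel_incl_is_kernel|].
  rewrite cat_compA, <- G_comp, (G_resp _ _ _ _ Hh), G_comp.
  rewrite <- cat_compA, He, cat_compA, <- eta_natural.
  rewrite <- cat_compA, <- F_comp, <- (F_resp _ _ _ _ Hh), F_comp.
  now rewrite cat_compA, <- He', cat_compA.
Qed.

Definition cover_compatible (P : AOb X) (e : @Hom B (Fob F P) (Fob G P)) : Prop :=
  exists eK, kernel_compatible (m2 P) eK /\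
    heq (comp e (Fmor F (cover X P))) (comp (Fmor G (cover X P)) eK).

Lemma cover_compatible_iso P : exists e t, are_inverse e t /\ cover_compatible P e.
Proof.
  destruct (kernel_compatible_iso _ _ (comp (m2 P) (m1 P))) as (eR & tR & HR & HeR).
  destruct (kernel_compatible_iso _ _ (m2 P)) as (eK & tK & HK & HeK).
  destruct (cokernel_iso _ _ _ _ _ _ (Fmor F (cover_rel X P)) (Fmor F (cover X P))
              (Fmor G (cover_rel X P)) (Fmor G (cover X P)) eR tR eK tK)
    as (e & t & He & Hc).
  - apply F_exact, cover_is_cokernel.
  - apply G_exact, cover_is_cokernel.
  - exact HR.
  - exact HK.
  - symmetry. apply (kernel_compatible_natural _ _ _ _ _ _ eR eK _ (m1 P) HeR HeK).
    apply kernel_incl_cover_rel.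
  - exists e, t. split; [exact He|]. exists eK. split; assumption.
Qed.

Lemma cover_compatible_natural P Q (al : @Hom (Adel X) P Q)
    (e : @Hom B (Fob F P) (Fob G P)) (e' : @Hom B (Fob F Q) (Fob G Q)) :
  cover_compatible P e -> cover_compatible Q e' ->
  heq (comp e' (Fmor F al)) (comp (Fmor G al) e).
Proof.
  intros (eK & HeK & He) (eK' & HeK' & He').
  destruct F_functor as (F_resp & _ & F_comp), G_functor as (G_resp & _ & G_comp).
  apply (cokernel_epi _ _ _ (Fmor F (cover_rel X P)) (Fmor F (cover X P)));
    [apply F_exact, cover_is_cokernel|].
  pose proof (cover_natural X P Q al) as Hc.
  rewrite <- cat_compA, <- F_comp, (F_resp _ _ _ _ Hc), F_comp.
  rewrite cat_compA, He', <- cat_compA.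
  rewrite <- (kernel_compatible_natural _ _ _ _ _ _ eK eK' _ (a2 al) HeK HeK')
    by apply kernel_incl_map.
  rewrite cat_compA, <- G_comp, <- (G_resp _ _ _ _ Hc), G_comp.
  now rewrite <- cat_compA, <- He, cat_compA.
Qed.

Lemma nat_iso_extend : nat_iso F G.
Proof.
  destruct (choose_inverse_pairs F G cover_compatible cover_compatible_iso)
    as (etaP & thP & HP).
  exists etaP, thP. split.
  - intro P. apply HP.
  - intros P Q al. apply cover_compatible_natural; apply HP.
Qed.

End Uniqueness.

Lemma exact_functor_unique (X : AddCat) {B : RawAdd} `{IsZeroCat B}
    (F G : Functor (Adel X) B) :
  is_functor F -> is_functor G -> is_exact F -> is_exact G ->
  nat_iso (fcomp F (jfun X)) (fcomp G (jfun X)) -> nat_iso F G.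
Proof.
  intros HF HG EF EG (eta & th & iso & nat).
  exact (nat_iso_extend X F G HF HG EF EG eta th iso nat).
Qed.

Theorem theorem4p3 (X : AddCat) (HX : has_biproducts X) :
  (is_functor (dIII X) /\ is_exact (dIII X) /\
   nat_iso (fcomp (dIII X) (jfun X)) (jop_d X)) /\
  (forall F : Functor (Adel X) (opR (Adel (opA X))),
      is_functor F -> is_exact F ->
      nat_iso (fcomp F (jfun X)) (jop_d X) ->
      nat_iso F (dIII X)).
Proof.
  split; [split; [|split]|].
  - apply dIII_functor.
  - apply dIII_exact.
  - apply dIII_j.
  - intros F HF EF HFj.
    apply (exact_functor_unique X F (dIII X) HF (dIII_functor X) EF (dIII_exact X)).
    exact (nat_iso_trans _ _ _ HFj (nat_iso_sym _ _ (dIII_j X))).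
Qed.
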